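(* If a locally convex space $E$ has a countable radial network, then every uncountable subset of $E$ contains an infinite bounded subset.
   Context: A family $\mathcal N$ of subsets of a topological vector space $E$ is a radial network if for every neighborhood $U$ of zero and every $x\in E$ there exist $N\in\mathcal N$ and a nonzero real $\varepsilon$ with $\varepsilon x\in N\subseteq U$. A set $B$ is bounded if for every neighborhood $U$ of zero there is $n\in\mathbb N$ with $B\subseteq nU$. *)

From HB Require Import structures.
From mathcomp Require Import all_boot all_order all_algebra.
From mathcomp Require Import all_classical all_reals all_analysis.
Set Implicit Arguments. Unset Strict Implicit. Unset Printing Implicit Defensive.
Import Order.TTheory GRing.Theory Num.Theory.
Local Open Scope classical_set_scope.
Local Open Scope ring_scope.

Definition radial_network (R : realType) (E : tvsType R) (N : set (set E)) :=
  forall (U : set E), nbhs (0 : E) U -> forall x : E,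
    exists N0, N N0 /\ exists eps : R, eps != 0 /\ N0 (eps *: x) /\ N0 `<=` U.

Definition tvs_bounded (R : realType) (E : tvsType R) (B : set E) :=
  forall (U : set E), nbhs (0 : E) U ->
    exists n : nat, B `<=` [set (n%:R : R) *: u | u in U].

From HB Require Import structures.
From mathcomp Require Import all_boot all_order all_algebra.
From mathcomp Require Import all_classical all_reals all_analysis.
Import Order.TTheory GRing.Theory Num.Theory.
Local Open Scope classical_set_scope.
Local Open Scope ring_scope.

(* Enumerate the radial network as (N_k) and record, for every point x and all
   k, m < j, whether x = c y with |c| <= m and y in N_k.  These finite records
   cut E into countably many cells, so the uncountable set A has a point a
   whose cells all meet A uncountably, and we may pick distinct x_j in A
   sharing the level-j record of a.  Given a neighbourhood U of 0, take the
   balanced W inside U and N_k with eps a in N_k, N_k inside W: then a lies in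
   m N_k for m >= 1/|eps|, hence so does every x_j with j > k, m, and the
   finitely many remaining x_j are absorbed by W. *)

Lemma countable_sub_range {T : Type} (x0 : T) {A : set T} :
  countable A -> exists f : nat -> T, A `<=` range f.
Proof.
move=> /countable_injP[g ginj]; exists ('pinv_(fun=> x0) A g) => a Aa.
by exists (g a) => //; rewrite pinvKV // inE.
Qed.

Lemma uncountable_condensation {T : Type} {P : set (set T)} {A : set T} :
  countable P -> ~ countable A ->
  exists2 a, A a & forall S, P S -> S a -> ~ countable (A `&` S).
Proof.
move=> cP nA; apply: contrapT => no_point; apply: nA.
have Acover : A `<=` \bigcup_(S in [set S | P S /\ countable (A `&` S)]) (A `&` S).
  move=> a Aa; apply: contrapT => na; apply: no_point; exists a => // S PS Sa cS.
  by apply: na; exists S.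
apply: sub_countable (subset_card_le Acover) _.
apply: bigcup_countable => [|S [] //].
by apply: sub_countable (subset_card_le _) cP => S [].
Qed.

Lemma infinite_sets_injective_choice {T : Type} {S : nat -> set T} :
  (forall j, infinite_set (S j)) ->
  exists x : nat -> T, injective x /\ forall j, S j (x j).
Proof.
elim/Pchoice: T S => T S Sinf.
have /choice[F FS] : forall s : seq T, exists y, S (size s) y /\ y \notin s.
  move=> s.
  have [y [Sy sy]] := infinite_setN0 (infinite_setD (Sinf (size s)) (finite_seq s)).
  by exists y; split=> //; apply/negP.
pose L n := iter n (fun s => F s :: s) [::].
have sizeL n : size (L n) = n by elim: n => //= n ->.
pose x n := F (L n).
have xL i j : (i < j)%N -> x i \in L j.
  elim: j => // j IH; rewrite ltnS leq_eqVlt in_cons => /orP[/eqP->|/IH->].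
    by rewrite eqxx.
  by rewrite orbT.
exists x; split=> [i j xij|j]; last by rewrite -[X in S X](sizeL j); apply: (FS _).1.
have xnL k : x k \notin L k by apply: (FS _).2.
have [ij|ji|//] := ltngtP i j.
  by have := xnL j; rewrite -xij (xL _ _ ij).
by have := xnL i; rewrite xij (xL _ _ ji).
Qed.

Section scaled_sets.
Context {R : realType} {E : tvsType R}.
Implicit Types (U W : set E) (x : E).

Definition balanced_core U : set E :=
  [set x | forall c : R, `|c| <= 1 -> U (c *: x)].

Definition scaled (r : R) W : set E :=
  [set c *: w | c in [set c : R | `|c| <= r] & w in W].

Lemma scaledS {r1 r2 : R} {W1 W2} :
  r1 <= r2 -> W1 `<=` W2 -> scaled r1 W1 `<=` scaled r2 W2.
Proof.
move=> r12 W12 _ [c cr1 [w W1w <-]].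
by exists c; [exact: le_trans cr1 r12 | exists w => //; apply: W12].
Qed.

Lemma nbhs0_balanced_core {U} : nbhs 0 U -> nbhs 0 (balanced_core U).
Proof.
move=> U0.
have := @scale_continuous R E ((0:R^o), (0:E)) U.
rewrite /= scaler0 => /(_ U0) [] /= B [B1 B2] BU.
move/nbhs_ballP: B1 => [e /= e0 eB].
have e2 : 0 < e / 2 by rewrite divr_gt0.
apply: filterS (nbhs0Z (lt0r_neq0 e2) B2) => _ [v Bv <-] c c1; rewrite scalerA.
apply: (BU (c * (e / 2), v)); split => //=; apply: eB.
rewrite /ball /= sub0r normrN normrM (gtr0_norm e2).
apply: le_lt_trans (ler_wpM2r (ltW e2) c1) _.
by rewrite mul1r ltr_pdivrMr // ltr_pMr // ltr1n.
Qed.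

Lemma nbhs0_absorbing {W} : nbhs 0 W -> forall x, exists n : nat, scaled n%:R W x.
Proof.
move=> W0 x.
have := @scale_continuous R E ((0:R^o), x) W.
rewrite /= scale0r => /(_ W0) [] /= B [B1 B2] BU.
move/nbhs_ballP: B1 => [e /= e0 eB].
pose n := (Num.truncn e^-1).+1.
have n0 : (0 : R) < n%:R by rewrite ltr0n.
exists n, n%:R; first by rewrite /= ger0_norm // ltW.
exists (n%:R^-1 *: x); last by rewrite scalerA divff ?gt_eqF // scale1r.
apply: (BU (n%:R^-1, x)); split => /=; last exact: nbhs_singleton.
apply: eB; rewrite /ball /= sub0r normrN ger0_norm ?invr_ge0 ?ltW //.
rewrite invf_plt //.
have ei : 0 <= e^-1 by rewrite invr_ge0 ltW.
by have /andP[_ ->] := truncn_itv ei.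
Qed.

Lemma nbhs0_absorbing_finite {W} : nbhs 0 W -> forall (x : nat -> E) n,
  exists m : nat, forall j, (j < n)%N -> scaled m%:R W (x j).
Proof.
move=> W0 x; elim=> [|n [m xm]]; first by exists 0%N.
have [mn xn] := nbhs0_absorbing W0 (x n).
exists (maxn m mn) => j; rewrite ltnS leq_eqVlt => /orP[/eqP->|/xm].
  by move: xn; apply: scaledS; rewrite ?ler_nat ?leq_maxr.
by apply: scaledS; rewrite ?ler_nat ?leq_maxl.
Qed.

Lemma scaled_balanced_core U (n : nat) :
  scaled n%:R (balanced_core U) `<=` [set n%:R *: u | u in U].
Proof.
move=> _ [c cn [w Uw <-]].
have [n0|n0] := eqVneq n 0%N.
  have -> : c = 0 by apply/eqP; rewrite -normr_le0; move: cn; rewrite n0.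
  rewrite n0.
  by exists (0 *: w); [apply: Uw; rewrite normr0 ler01 | rewrite !scale0r].
exists ((c / n%:R) *: w).
  by apply: Uw; rewrite normrM normfV normr_nat ler_pdivrMr ?mul1r // ltr0n lt0n.
by rewrite scalerA mulrCA divff ?mulr1 // pnatr_eq0.
Qed.

Lemma bounded_eventually_scaled (x : nat -> E) :
  (forall W, nbhs 0 W ->
     exists m j0 : nat, forall j, (j0 <= j)%N -> scaled m%:R W (x j)) ->
  tvs_bounded (range x).
Proof.
move=> xW U U0; have W0 := nbhs0_balanced_core U0.
have [m [j0 xm]] := xW _ W0.
have [m0 xm0] := nbhs0_absorbing_finite W0 x j0.
exists (maxn m m0) => _ [j _ <-]; apply: scaled_balanced_core.
by have [/xm|/xm0] := leqP j0 j; apply: scaledS; rewrite ?ler_nat ?leq_maxl ?leq_maxr.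
Qed.

Lemma radial_network_scaled {N : set (set E)} {W} :
  radial_network N -> nbhs 0 W -> forall a,
  exists S, [/\ N S, S `<=` W & exists m : nat, scaled m%:R S a].
Proof.
move=> rN W0 a; have [S [NS [eps [eps0 [Sa SW]]]]] := rN W W0 a.
exists S; split => //; exists (Num.truncn `|eps^-1|).+1, eps^-1.
  by have /andP[_ /ltW] := truncn_itv (normr_ge0 eps^-1).
by exists (eps *: a) => //; rewrite scalerA mulVf // scale1r.
Qed.

Definition profile (f : nat -> set E) (j : nat) x : {ffun 'I_j * 'I_j -> bool} :=
  [ffun km : 'I_j * 'I_j => `[< scaled km.2%:R (f km.1) x >]].

Lemma profile_scaled f j k m (a z : E) : (k < j)%N -> (m < j)%N ->
  profile f j z = profile f j a -> scaled m%:R (f k) a -> scaled m%:R (f k) z.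
Proof.
move=> kj mj /ffunP/(_ (Ordinal kj, Ordinal mj)).
by rewrite !ffunE /= => eqp /asboolP am; apply/asboolP; rewrite eqp.
Qed.

Lemma uncountable_profile_condensation f {A : set E} : ~ countable A ->
  exists2 a, A a &
    forall j, ~ countable (A `&` [set z | profile f j z = profile f j a]).
Proof.
move=> nA.
pose fiber (jv : {j : nat & {ffun 'I_j * 'I_j -> bool}}) :=
  [set z | profile f (projT1 jv) z = projT2 jv].
have cP : countable (range fiber).
  exact: sub_countable (card_image_le _ _) (countableP _).
have [a Aa Aa_unc] := uncountable_condensation cP nA.
by exists a => // j; apply: Aa_unc => //; exists (existT _ j (profile f j a)).
Qed.

End scaled_sets.

Theorem theorem5p1 (R : realType) (E : tvsType R) :
  (exists N : set (set E), countable N /\ radial_network N) ->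
  forall A : set E, ~ countable A ->
    exists B : set E, B `<=` A /\ infinite_set B /\ tvs_bounded B.
Proof.
move=> [N [cN rN]] A nA.
have [f Nf] := countable_sub_range set0 cN.
have [a _ Afib] := uncountable_profile_condensation f nA.
have [x [xinj Ax]] := infinite_sets_injective_choice
  (fun j fin => Afib j (finite_set_countable fin)).
exists (range x); split; first by move=> _ [j _ <-]; case: (Ax j).
split.
  apply/infiniteP; have := card_esym (@inj_card_eq _ _ setT x (in2W xinj)).
  by rewrite card_eq_le => /andP[].
apply: bounded_eventually_scaled => W W0.
have [S [NS SW [m am]]] := radial_network_scaled rN W0 a.
have [k _ fk] := Nf S NS.
exists m, (maxn k m).+1 => j kmj.
apply: (scaledS (lexx _) SW); rewrite -fk in am *.
apply: profile_scaled am; last exact: (Ax j).2.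
  exact: leq_ltn_trans (leq_maxl k m) kmj.
exact: leq_ltn_trans (leq_maxr k m) kmj.
Qed.
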